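(* Let $(X,\mathcal{B},\mu,f)$ be a measure preserving system and $\{E_{\rho_n}\}_{n\ge1}$ a sequence of measurable subsets of $X$; put $E^k_{\rho_n}=f^{-k}E_{\rho_n}$. Fix $r\in\mathbb{Z}_+$ and let $H_r=\bigcap_{m\ge1}\bigcup_{n\ge m}\{x:\#\{1\le k\le n:x\in E^k_{\rho_n}\}\ge r\}$. If $E_{\rho_{n_1}}\subset E_{\rho_{n_2}}$ whenever $n_1\ge n_2$, and $\lim_{n\to\infty}\mu(E_{\rho_n})=0$, then $\mu(H_r\,\Delta\, f^{-1}H_r)=0$. *)

From HB Require Import structures.
From mathcomp Require Import all_boot all_order all_algebra.
From mathcomp Require Import all_classical all_reals all_analysis.
Set Implicit Arguments. Unset Strict Implicit. Unset Printing Implicit Defensive.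
Import Order.TTheory GRing.Theory Num.Theory.
Local Open Scope classical_set_scope.

Definition hit_count (T : Type) (f : T -> T) (E : nat -> set T) (n : nat) (x : T) : nat :=
  (\sum_(1 <= k < n.+1) (asbool (E n (iter k f x)) : nat))%N.

Definition H_set (T : Type) (f : T -> T) (E : nat -> set T) (r : nat) : set T :=
  \bigcap_(m in [set m : nat | (1 <= m)%N])
    \bigcup_(n in [set n : nat | (m <= n)%N]) [set x | (r <= hit_count f E n x)%N].

Definition symdiff (T : Type) (A B : set T) : set T := (A `\` B) `|` (B `\` A).

From HB Require Import structures.
From mathcomp Require Import all_boot all_order all_algebra.
From mathcomp Require Import all_classical all_reals all_analysis.
Import Order.TTheory GRing.Theory Num.Theory.
Local Open Scope classical_set_scope.
Local Open Scope ring_scope.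

(* Let [x] be in [H] with [f x] outside [E N].  As the [E n] decrease, [f x]
   is outside every [E n] with [n >= N], so dropping the time-[1] term shows
   that the orbit of [f x] hits [E n] at least as often as that of [x]; hence
   [f x] is in [H].  Thus [H \ f^-1 H] lies in every [f^-1 (E N)], a set of
   measure [mu (E N)] -> 0.  As [f] preserves the finite measure [mu],
   [f^-1 H \ H] has the same measure as [H \ f^-1 H]. *)

Lemma measurable_count_ge d (T : measurableType d) (s : seq nat) (P : nat -> set T) :
  (forall k, k \in s -> measurable (P k)) -> forall r : nat,
  measurable [set x | (r <= \sum_(k <- s) (asbool (P k x) : nat))%N].
Proof.
elim: s => [|a s IH] mP r.
  case: r => [|r].
    by rewrite (_ : [set x | _] = setT) //; apply/seteqP; split.
  by rewrite (_ : [set x | _] = set0) //; apply/seteqP; split => x //=; rewrite big_nil.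
have mPa : measurable (P a) by apply: mP; rewrite mem_head.
have mPs : forall r, measurable [set x | (r <= \sum_(k <- s) (asbool (P k x) : nat))%N].
  by apply: IH => k ks; apply: mP; rewrite in_cons ks orbT.
rewrite (_ : [set x | _] =
    (P a `&` [set x | (r.-1 <= \sum_(k <- s) (asbool (P k x) : nat))%N])
    `|` (~` P a `&` [set x | (r <= \sum_(k <- s) (asbool (P k x) : nat))%N])).
  by apply: measurableU; apply: measurableI => //; exact: measurableC.
apply/seteqP; split => x /=; rewrite big_cons.
  case: (asboolP (P a x)) => Pax /= le_r; [left|right]; split => //.
  by move: le_r; case: r => //= r; rewrite add1n ltnS.
case=> -[Pax le_r]; case: (asboolP (P a x)) => // _.
by move: le_r; case: r => //= r; rewrite add1n ltnS.
Qed.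

Lemma measurable_fun_iter d (T : measurableType d) (f : T -> T) (k : nat) :
  measurable_fun setT f -> measurable_fun setT (iter k f).
Proof.
move=> mf; elim: k => [|k IHk]; first exact: measurable_id.
by rewrite (_ : iter k.+1 f = f \o iter k f) //; exact: measurableT_comp.
Qed.

Lemma measurable_preimageT d d' (T : measurableType d) (U : measurableType d')
    (g : T -> U) (A : set U) :
  measurable_fun setT g -> measurable A -> measurable (g @^-1` A).
Proof. by move=> mg mA; rewrite -[g @^-1` A]setTI; exact: mg. Qed.

Lemma measurable_H_set d (T : measurableType d) (f : T -> T) (E : nat -> set T)
    (r : nat) :
  measurable_fun setT f -> (forall n, (1 <= n)%N -> measurable (E n)) ->
  measurable (H_set f E r).
Proof.
move=> mf mE; apply: bigcap_measurableType => m _; apply: bigcup_measurable => n _.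
apply: (@measurable_count_ge _ _ _ (fun k => iter k f @^-1` E n)) => k.
rewrite mem_index_iota => /andP[k_ge1 k_le_n].
apply: measurable_preimageT; first exact: measurable_fun_iter.
exact/mE/(leq_trans k_ge1).
Qed.

Lemma hit_count_le_shift (T : Type) (f : T -> T) (E : nat -> set T) (n : nat) (x : T) :
  ~ E n (f x) -> (hit_count f E n x <= hit_count f E n (f x))%N.
Proof.
case: n => [|n] Enfx; first by rewrite /hit_count !big_geq.
rewrite /hit_count big_nat_recl // [X in (_ <= X)%N]big_nat_recr //=.
rewrite (_ : asbool (E n.+1 (f x)) = false); last exact/asboolP.
rewrite add0n; apply: leq_trans (leq_addr _ _).
by apply: leq_sum => k _; rewrite -iterSr.
Qed.

Lemma H_set_diff_preimage_sub (T : Type) (f : T -> T) (E : nat -> set T) (r N : nat) :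
  (forall n1 n2, (1 <= n2)%N -> (n2 <= n1)%N -> E n1 `<=` E n2) -> (1 <= N)%N ->
  H_set f E r `\` f @^-1` H_set f E r `<=` f @^-1` E N.
Proof.
move=> E_decr N_ge1 x [Hx fxNH]; apply: contrapT => fxNE; apply: fxNH => m m_ge1.
have [n /= mN_le_n r_le] := Hx (maxn m N) (leq_trans m_ge1 (leq_maxl _ _)).
have N_le_n : (N <= n)%N by rewrite (leq_trans (leq_maxr _ _) mN_le_n).
exists n; first by rewrite /= (leq_trans (leq_maxl _ _) mN_le_n).
apply: (leq_trans r_le); apply: hit_count_le_shift => Enfx.
exact/fxNE/(E_decr n N N_ge1 N_le_n).
Qed.

Section measure_facts.
Local Open Scope ereal_scope.
Context {d} {T : measurableType d} {R : realType} (mu : {measure set T -> \bar R}).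

Lemma measureD_swap (A B : set T) :
  measurable A -> measurable B -> mu A < +oo -> mu A = mu B ->
  mu (B `\` A) = mu (A `\` B).
Proof.
move=> mA mB ltA eqAB; have ltB : mu B < +oo by rewrite -eqAB.
by rewrite !measureD // setIC; congr (_ - _); exact/esym.
Qed.

Lemma measure_symdiff_eq0 (A B : set T) :
  measurable A -> measurable B -> mu A < +oo -> mu A = mu B ->
  mu (A `\` B) = 0 -> mu (symdiff A B) = 0.
Proof.
move=> mA mB ltA eqAB AB0; apply/le_anti; rewrite measure_ge0 andbT.
have sum0 : mu (A `\` B) + mu (B `\` A) = 0 by rewrite (measureD_swap A B) // AB0 adde0.
apply: le_trans (measureU2 _ _ _) _; try exact: measurableD.
by rewrite sum0.
Qed.

Lemma measure_le_cvg0 (A : set T) (u : nat -> \bar R) :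
  u @ \oo --> 0 -> (\forall N \near \oo, mu A <= u N) -> mu A = 0.
Proof.
move=> u0 le_u; apply/le_anti; rewrite measure_ge0 andbT.
by rewrite -(cvg_lim _ u0) //; apply: lime_ge => //; apply/cvg_ex; exists 0.
Qed.

End measure_facts.

Theorem proposition2p10 (d : measure_display) (T : measurableType d) (R : realType)
  (mu : probability T R) (f : T -> T)
  (f_meas : measurable_fun setT f)
  (f_pres : forall A : set T, measurable A -> mu (f @^-1` A) = mu A)
  (E : nat -> set T)
  (E_meas : forall n : nat, (1 <= n)%N -> measurable (E n))
  (r : nat)
  (E_decr : forall n1 n2 : nat, (1 <= n2)%N -> (n2 <= n1)%N -> E n1 `<=` E n2)
  (E_lim : (fun n => mu (E n)) @ \oo --> 0%E) :
  mu (symdiff (H_set f E r) (f @^-1` H_set f E r)) = 0%E.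
Proof.
set H := H_set f E r.
have mH : measurable H by exact: measurable_H_set.
have mfH : measurable (f @^-1` H) by exact: measurable_preimageT.
have H_diff0 : mu (H `\` f @^-1` H) = 0%E.
  apply: measure_le_cvg0 E_lim _; near=> N.
  have N_ge1 : (1 <= N)%N by near: N; exists 1%N.
  rewrite -f_pres; last exact: E_meas.
  apply: le_measure; rewrite ?inE; [exact: measurableD | |].
  - exact/measurable_preimageT/E_meas.
  - exact: H_set_diff_preimage_sub.
have ltH : (mu H < +oo)%E by rewrite ltey_eq fin_num_measure.
apply: (measure_symdiff_eq0 mu _ _ mH mfH ltH _ H_diff0).
exact: esym (f_pres _ mH).
Unshelve. all: by end_near.
Qed.
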